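(* (Stability condition for D-GLDPC codes.) Consider a D-GLDPC ensemble on the BEC with channel erasure probability $q\in[0,1]$, whose variable node decoder has EXIT function $$I_{E,V}(p,q)=\sum_{j\ge2}\lambda^{(\mathrm r)}_j(1-q\,p^{j-1})+\sum_i\lambda_iI^{(i)}_{E,V}(p,q),$$ where each $I^{(i)}_{E,V}$ is the variable-node EXIT function (for a fixed generator matrix $\mathbf{G}^{(i)}_V$) of an $(n_i,k_i)$ binary linear code $\mathcal{V}_i$ with $d_{\min}(\mathcal{V}_i)\ge2$, and whose check node decoder is as in the context, with all check component codes $\mathcal{C}_i$ of minimum distance at least $2$. Let $D_C$ be as in the context and assume $D_C>0$. Then $$-\frac{\partial I_{E,V}(p,q)}{\partial p}\Big|_{p=0}=q\lambda^{(\mathrm r)}_2+\sum_{i:\,d_{\min}(\mathcal{V}_i)=2}\ \sum_{z=0}^{k_i}q^z(1-q)^{k_i-z}\frac{2\lambda_i}{n_i}\Delta^{(i)}_{n_i-2,k_i-z},$$ so the stability condition $-\frac{\partial I_{E,V}}{\partial p}\big|_{p=0}\le D_C^{-1}$ reads $$q\lambda^{(\mathrm r)}_2+\sum_{i:\,d_{\min}(\mathcal{V}_i)=2}\sum_{z=0}^{k_i}q^z(1-q)^{k_i-z}\frac{2\lambda_i\Delta^{(i)}_{n_i-2,k_i-z}}{n_i}\le\Big[\rho'_{\mathrm{SPC}}(1)+\sum_{i:\,d_{\min}(\mathcal{C}_i)=2}\frac{2\rho_i}{n_i}\Delta^{(i)}_{n_i-2}\Big]^{-1}.$$ In particular, if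 every generalized variable component code $\mathcal{V}_i$ has $d_{\min}\ge3$ and $\lambda^{(\mathrm r)}_2>0$, the stability condition is equivalent to $q\le[\lambda^{(\mathrm r)}_2D_C]^{-1}$ (with equality in the stability condition iff $q=[\lambda^{(\mathrm r)}_2D_C]^{-1}$), and if moreover all generalized check component codes have $d_{\min}\ge3$, it is equivalent to $q\le[\lambda^{(\mathrm r)}_2\rho'_{\mathrm{SPC}}(1)]^{-1}$.
   Context: Edge fractions $\lambda^{(\mathrm r)}_j,\lambda_i\ge0$ sum to $1$; $\rho^{(\mathrm{SPC})}_j,\rho_i\ge0$ sum to $1$. Check node decoder EXIT function: $I_{E,C}(p)=\sum_{j\ge2}\rho^{(\mathrm{SPC})}_j(1-p)^{j-1}+\sum_i\rho_iI^{(i)}_{E,C}(p)$, where for an $(n,k)$ check code with generator matrix $\mathbf{G}$ (rank $k$), $I_{E}(p)=1-\frac1n\sum_{t=0}^{n-1}a_tp^t(1-p)^{n-t-1}$, $a_t=(n-t)\tilde e_{n-t}-(t+1)\tilde e_{n-t-1}$, $\tilde e_g=\sum_{|S|=g}\operatorname{rank}(\mathbf{G}_S)$ over $g$-element column sets. $\rho'_{\mathrm{SPC}}(1)=\sum_j(j-1)\rho^{(\mathrm{SPC})}_j$, $\Delta^{(i)}_{n_i-2}=\sum_{|S|=n_i-2}(k_i-\operatorname{rank}(\mathbf{G}^{(i)}_S))$ for a generator matrix of $\mathcal{C}_i$, and $D_C=\rho'_{\mathrm{SPC}}(1)+\sum_{i:\,d_{\min}(\mathcal{C}_i)=2}\frac{2\rho_i}{n_i}\Delta^{(i)}_{n_i-2}$.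 For an $(n,k)$ variable code with generator matrix $\mathbf{G}$ and $\mathbf{I}_k$ the identity: $\tilde e_{g,h}=\sum_{S,T}\operatorname{rank}[\mathbf{G}_S|(\mathbf{I}_k)_T]$ over $g$-element column sets $S$ of $\mathbf{G}$ and $h$-element column sets $T$ of $\mathbf{I}_k$; $a_{t,z}=(n-t)\tilde e_{n-t,k-z}-(t+1)\tilde e_{n-t-1,k-z}$; variable-node EXIT function $I_E(p,q)=1-\frac1n\sum_{t=0}^{n-1}\sum_{z=0}^ka_{t,z}p^t(1-p)^{n-t-1}q^z(1-q)^{k-z}$; and $\Delta_{n-2,k-z}=\sum_{S,T}(k-\operatorname{rank}[\mathbf{G}_S|(\mathbf{I}_k)_T])$ over $(n-2)$-element $S$ and $(k-z)$-element $T$. $\Delta^{(i)}_{n_i-2,k_i-z}$ is this quantity for $\mathbf{G}^{(i)}_V$. *)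

From HB Require Import structures.
From mathcomp Require Import all_boot all_order all_algebra.
Set Implicit Arguments. Unset Strict Implicit. Unset Printing Implicit Defensive.
Import Order.TTheory GRing.Theory Num.Theory.
Local Open Scope ring_scope.

Notation F2 := ('F_2 : fieldType).

(* G_S : the submatrix of G formed by the columns indexed by S (in increasing order). *)
Definition colS (k n : nat) (G : 'M[F2]_(k, n)) (S : {set 'I_n}) : 'M[F2]_(k, #|S|) :=
  colsub (fun j : 'I_#|S| => enum_val j) G.

Definition wt (n : nat) (c : 'rV[F2]_n) : nat := #|[set j | c 0 j != 0]|.

(* Minimum distance of the code spanned by the rows of G (the row space);
   by convention n.+1 (i.e. "infinity") for the zero code. *)
Definition dmin (k n : nat) (G : 'M[F2]_(k, n)) : nat :=
  \big[minn/n.+1]_(c : 'rV[F2]_n | (c <= G)%MS && (c != 0)) wt c.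

Definition etilde (k n : nat) (G : 'M[F2]_(k, n)) (g : nat) : nat :=
  \sum_(S : {set 'I_n} | #|S| == g) \rank (colS G S).

Definition DeltaC (k n : nat) (G : 'M[F2]_(k, n)) (g : nat) : nat :=
  \sum_(S : {set 'I_n} | #|S| == g) (k - \rank (colS G S))%N.

Definition rkST (k n : nat) (G : 'M[F2]_(k, n)) (S : {set 'I_n}) (T : {set 'I_k}) : nat :=
  \rank (row_mx (colS G S) (colS (1%:M : 'M[F2]_k) T)).

Definition etilde2 (k n : nat) (G : 'M[F2]_(k, n)) (g h : nat) : nat :=
  \sum_(S : {set 'I_n} | #|S| == g) \sum_(T : {set 'I_k} | #|T| == h) rkST G S T.

Definition DeltaV (k n : nat) (G : 'M[F2]_(k, n)) (g h : nat) : nat :=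
  \sum_(S : {set 'I_n} | #|S| == g) \sum_(T : {set 'I_k} | #|T| == h) (k - rkST G S T)%N.

Definition a_tz (R : nzRingType) (k n : nat) (G : 'M[F2]_(k, n)) (t z : nat) : R :=
  ((n - t)%N)%:R * (etilde2 G (n - t) (k - z))%:R
  - (t.+1)%:R * (etilde2 G (n - t - 1) (k - z))%:R.

Definition IEV_code (R : fieldType) (k n : nat) (G : 'M[F2]_(k, n)) (q : R) : {poly R} :=
  1 - (n%:R)^-1 *:
    \sum_(t < n) \sum_(z < k.+1)
       (a_tz R G t z * q ^+ z * (1 - q) ^+ (k - z)) *: ('X ^+ t * (1 - 'X) ^+ (n - t - 1)).

Definition IEV (R : fieldType) (Nr : nat) (lamr : nat -> R)
  (mV : nat) (nV kV : 'I_mV -> nat) (GV : forall i, 'M[F2]_(kV i, nV i))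
  (lamV : 'I_mV -> R) (q : R) : {poly R} :=
  \sum_(2 <= j < Nr) lamr j *: (1 - q *: 'X ^+ j.-1)
  + \sum_(i < mV) lamV i *: IEV_code (GV i) q.

Definition rhoSPCprime (R : nzRingType) (Ns : nat) (rhoS : nat -> R) : R :=
  \sum_(2 <= j < Ns) (j.-1)%:R * rhoS j.

Definition D_C (R : fieldType) (Ns : nat) (rhoS : nat -> R)
  (mC : nat) (nC kC : 'I_mC -> nat) (GC : forall i, 'M[F2]_(kC i, nC i))
  (rhoC : 'I_mC -> R) : R :=
  rhoSPCprime Ns rhoS
  + \sum_(i < mC | dmin (GC i) == 2%N)
      2%:R * rhoC i / (nC i)%:R * (DeltaC (GC i) (nC i - 2))%:R.

From HB Require Import structures.
From mathcomp Require Import all_boot all_order all_algebra.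
From mathcomp Require Import ring zify.
Import Order.TTheory GRing.Theory Num.Theory.
Set Implicit Arguments. Unset Strict Implicit. Unset Printing Implicit Defensive.
Local Open Scope ring_scope.

(* The stability condition only involves the slope at p = 0 of the variable
   node EXIT function, i.e. the linear coefficient of the polynomial
   I_{E,V}(., q).  The proof computes this coefficient term by term.
   - Coding side: if G has full rank k, every set of columns whose complement
     is smaller than d_min(G) still has rank k (a kernel vector of G_S would
     give a nonzero codeword supported on the complement).  Hence the
     deficiencies Delta_{g,h} vanish for n - g < d_min, and e~_{g,h} equals
     its "full rank" value C(n,g) C(k,h) k minus Delta_{g,h}.
   - Consequently, when d_min >= 2, the coefficients a_{0,z} vanish and
     a_{1,z} = 2 Delta_{n-2,k-z}; only the terms t = 0, 1 of the Bernstein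
     expansion can contribute to the linear coefficient, which gives the
     slope of each generalized component, and it is 0 when d_min >= 3.
   - The repetition codes contribute q lambda_2, which yields the slope
     formula; the threshold forms are elementary manipulations in an ordered
     field, once the d_min = 2 sums are seen to be empty. *)

Section ComponentCode.

Variables (k n : nat) (G : 'M[F2]_(k, n)).

Lemma dmin_le (c : 'rV[F2]_n) : (c <= G)%MS -> c != 0 -> (dmin G <= wt c)%N.
Proof.
move=> cG c0; rewrite /dmin unlock /reducebig.
have : c \in index_enum _ := mem_index_enum c.
elim: (index_enum _) => //= a s IH; rewrite inE => /orP [/eqP <-|/IH h].
  by rewrite cG c0 /= geq_minl.
by case: ifP => _ //; rewrite geq_min h orbT.
Qed.

Lemma etilde2_natr (R : nzRingType) (g h : nat) :
  (etilde2 G g h)%:R = ('C(n, g) * ('C(k, h) * k))%:R - (DeltaV G g h)%:R :> R.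
Proof.
have count_sets (m l : nat) : #|[pred S : {set 'I_m} | #|S| == l]| = 'C(m, l).
  by rewrite -cardsE card_draws card_ord.
apply/eqP; rewrite eq_sym subr_eq -natrD; apply/eqP; congr _%:R.
rewrite /etilde2 /DeltaV -!count_sets -big_split -sum_nat_const /=.
apply: eq_bigr => S _; rewrite -big_split -sum_nat_const; apply: eq_bigr => T _.
by rewrite /= subnKC // rank_leq_row.
Qed.

Hypothesis rankG : \rank G = k.

(* Puncturing fewer than d_min positions preserves the rank of G: a nonzero
   u with u G_S = 0 would give a codeword u G supported on the complement of S. *)
Lemma rank_colS_full (S : {set 'I_n}) :
  (#|~: S| < dmin G)%N -> \rank (colS G S) = k.
Proof.
move=> small_compl; apply/eqP; rewrite eqn_leq rank_leq_row /= leqNgt.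
apply/negP => rank_drop.
have : kermx (colS G S) != 0 by rewrite -mxrank_eq0 mxrank_ker subn_eq0 -ltnNge.
case/rowV0Pn => u /sub_kermxP uK u0.
have c0 : u *m G != 0 by rewrite mulmx_free_eq0 // /row_free rankG.
have supp_c : forall j, j \in S -> (u *m G) 0 j = 0.
  move=> j jS.
  have e : (u *m colS G S) 0 (enum_rank_in jS j) = 0 by rewrite uK mxE.
  rewrite mxE in e; rewrite mxE -[RHS]e; apply: eq_bigr => i _.
  by rewrite /colS mxE enum_rankK_in.
have wt_le : (wt (u *m G) <= #|~: S|)%N.
  apply: subset_leq_card; apply/subsetP => j; rewrite !inE.
  by apply: contra => jS; rewrite supp_c.
have := leq_trans (dmin_le (submxMl u G) c0) wt_le.
by rewrite leqNgt small_compl.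
Qed.

Lemma rkST_full (S : {set 'I_n}) (T : {set 'I_k}) :
  (#|~: S| < dmin G)%N -> rkST G S T = k.
Proof.
move=> small_compl; apply/eqP; rewrite eqn_leq rank_leq_row /=.
rewrite -{1}(rank_colS_full small_compl) /rkST.
set M := row_mx _ _.
have -> : colS G S = M *m col_mx 1%:M 0.
  by rewrite /M mul_row_col mulmx1 mulmx0 addr0.
exact: mxrankM_maxl.
Qed.

Lemma DeltaV_eq0 (g h : nat) : (n - g < dmin G)%N -> DeltaV G g h = 0%N.
Proof.
move=> hg; rewrite /DeltaV big1 // => S /eqP Sg; rewrite big1 // => T _.
have cS : #|~: S| = (n - g)%N by rewrite -[n in (n - g)%N]card_ord -(cardsC S) Sg addKn.
by rewrite rkST_full ?subnn // cS.
Qed.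

Lemma DeltaV_dmin3 (h : nat) : (3 <= dmin G)%N -> DeltaV G (n - 2) h = 0%N.
Proof. by move=> dminG3; apply: DeltaV_eq0; apply: leq_trans dminG3; lia. Qed.

Hypothesis dminG : (2 <= dmin G)%N.

Lemma DeltaV_low (g h : nat) : (n - g < 2)%N -> DeltaV G g h = 0%N.
Proof. by move=> hg; apply: DeltaV_eq0 (leq_trans hg dminG). Qed.

(* The constant Bernstein coefficients a_{0,z} vanish ... *)
Lemma a_tz_at0 (R : nzRingType) (z : nat) : (0 < n)%N -> a_tz R G 0 z = 0.
Proof.
move=> n_gt0; have drop0 : (n - n < 2)%N by rewrite subnn.
have drop1 : (n - (n - 1) < 2)%N by lia.
rewrite /a_tz !subn0 !etilde2_natr (DeltaV_low _ drop0) (DeltaV_low _ drop1).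
by rewrite !subr0 binn (bin_sub n_gt0) bin1 mul1n mul1r -natrM subrr.
Qed.

(* ... and the next ones are a_{1,z} = 2 Delta_{n-2,k-z}, since
   (n-1) n = 2 C(n,2). *)
Lemma a_tz_at1 (R : comNzRingType) (z : nat) :
  (1 < n)%N -> a_tz R G 1 z = 2%:R * (DeltaV G (n - 2) (k - z))%:R.
Proof.
move=> n_gt1; have drop1 : (n - (n - 1) < 2)%N by lia.
rewrite /a_tz -subnDA !etilde2_natr (DeltaV_low _ drop1).
rewrite subr0 (bin_sub (ltnW n_gt1)) (bin_sub n_gt1) bin1.
set Y := ('C(k, k - z) * k)%N.
have binom2 : (n - 1)%:R * (n * Y)%:R = 2%:R * ('C(n, 2) * Y)%:R :> R.
  by rewrite -!natrM mulnA mulnA (mul_bin_left n 1) bin1 mulnC.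
by rewrite mulrBr binom2; ring.
Qed.

End ComponentCode.

Lemma coef_omX_pow (R : nzRingType) (m : nat) :
  ((1 - 'X : {poly R}) ^+ m)`_0 = 1 /\ ((1 - 'X : {poly R}) ^+ m)`_1 = - m%:R.
Proof.
elim: m => [|m [IH0 IH1]]; first by rewrite expr0 !coef1 /= oppr0.
rewrite exprS mulrBl mul1r !coefB !coefXM /= IH0 IH1 subr0; split => //.
by rewrite -opprD -natr1 addrC.
Qed.

Lemma coef1_XomX (R : nzRingType) (t m : nat) :
  ('X^t * (1 - 'X) ^+ m : {poly R})`_1 =
  if t == 0%N then - m%:R else if t == 1%N then 1 else 0.
Proof.
case: t => [|[|t]] /=.
- by rewrite expr0 mul1r (coef_omX_pow R m).2.
- by rewrite expr1 coefXM /= (coef_omX_pow R m).1.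
- by rewrite coefXnM.
Qed.

Lemma sum_ord_at1 (V : nmodType) (n : nat) (F : nat -> V) :
  (forall t, (t < n)%N -> t != 1%N -> F t = 0) ->
  \sum_(t < n) F t = if (1 < n)%N then F 1%N else 0.
Proof.
move=> F0; case: n F0 => [|[|n]] F0; first by rewrite big_ord0.
  by rewrite big_ord1 F0.
rewrite 2!big_ord_recl F0 // add0r big1 ?addr0 // => i _.
by rewrite F0 //= !ltnS.
Qed.

Lemma IEV_code_slope (R : fieldType) (k n : nat) (G : 'M[F2]_(k, n)) (q : R) :
  \rank G = k -> (2 <= dmin G)%N ->
  - (IEV_code G q)`_1 = \sum_(z < k.+1) q ^+ z * (1 - q) ^+ (k - z)
                          * (2%:R / n%:R) * (DeltaV G (n - 2) (k - z))%:R.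
Proof.
move=> rankG dminG.
rewrite /IEV_code coefB coef1 sub0r opprK coefZ coef_sum.
pose F t := \sum_(z < k.+1) a_tz R G t z * q ^+ z * (1 - q) ^+ (k - z)
  * (if t == 0%N then - (n - t - 1)%:R else if t == 1%N then 1 else 0).
rewrite (eq_bigr (fun t : 'I_n => F t)) => [|t _]; last first.
  by rewrite coef_sum; apply: eq_bigr => z _; rewrite coefZ coef1_XomX.
rewrite (@sum_ord_at1 _ n F) => [|t t_lt t_ne1]; last first.
  rewrite /F (negPf t_ne1); case: eqP => [t0|_]; last by rewrite big1 // => z _; rewrite mulr0.
  by rewrite big1 // t0 => z _; rewrite a_tz_at0 ?mul0r // -t0.
case: ifP => [n_gt1|n_le1]; last first.
  rewrite mulr0 big1 // => z _; rewrite DeltaV_low ?mulr0 //; lia.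
rewrite /F mulr_sumr; apply: eq_bigr => z _.
by rewrite a_tz_at1 //=; ring.
Qed.

Lemma repetition_slope (R : fieldType) (Nr : nat) (lamr : nat -> R) (q : R) :
  (forall j, ~~ (2 <= j < Nr)%N -> lamr j = 0) ->
  - (\sum_(2 <= j < Nr) lamr j *: (1 - q *: 'X ^+ j.-1) : {poly R})`_1 = q * lamr 2%N.
Proof.
move=> lamr0; rewrite coef_sum -sumrN.
under eq_bigr => j _ do rewrite coefZ coefB coef1 coefZ coefXn sub0r mulrN opprK.
case: (ltnP 2 Nr) => [Nr_gt2|Nr_le2]; last first.
  by rewrite big_geq // lamr0 ?mulr0 // -leqNgt.
rewrite big_ltn //= mulr1 mulrC big1_seq ?addr0 // => j.
rewrite mem_index_iota => j_range.
have -> : (1 == j.-1)%N = false by lia.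
by rewrite mulr0 mulr0.
Qed.

Lemma IEV_slope (R : fieldType) (Nr : nat) (lamr : nat -> R)
  (mV : nat) (nV kV : 'I_mV -> nat) (GV : forall i, 'M[F2]_(kV i, nV i))
  (lamV : 'I_mV -> R) (q : R) :
  (forall j, ~~ (2 <= j < Nr)%N -> lamr j = 0) ->
  (forall i, \rank (GV i) = kV i) -> (forall i, (2 <= dmin (GV i))%N) ->
  - ((IEV Nr lamr GV lamV q)^`()).[0] = q * lamr 2%N
     + \sum_(i < mV | dmin (GV i) == 2%N) \sum_(z < (kV i).+1)
          q ^+ z * (1 - q) ^+ (kV i - z) * (2%:R * lamV i / (nV i)%:R)
          * (DeltaV (GV i) (nV i - 2) (kV i - z))%:R.
Proof.
move=> lamr0 rankGV dminGV.
rewrite horner_coef0 coef_deriv mulr1n /IEV coefD opprD repetition_slope //.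
congr (_ + _); rewrite coef_sum -sumrN (bigID (fun i => dmin (GV i) == 2%N)) /=.
rewrite [X in _ + X]big1 ?addr0 => [|i dmin_ne2]; last first.
  rewrite coefZ -mulrN IEV_code_slope // big1 ?mulr0 // => z _.
  rewrite DeltaV_dmin3 ?mulr0 //; move: (dminGV i); rewrite leq_eqVlt eq_sym.
  by rewrite (negPf dmin_ne2).
apply: eq_bigr => i _; rewrite coefZ -mulrN IEV_code_slope // mulr_sumr.
by apply: eq_bigr => z _; ring.
Qed.

Lemma stability_threshold (R : realFieldType) (l D q : R) : 0 < l -> 0 < D ->
  (q * l <= D^-1 <-> q <= (l * D)^-1) /\ (q * l = D^-1 <-> q = (l * D)^-1).
Proof.
move=> l_gt0 D_gt0; have -> : (l * D)^-1 = D^-1 / l by rewrite invfM mulrC.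
rewrite ler_pdivlMr //; split => //.
by split => [<-|->]; [rewrite mulfK ?gt_eqF | rewrite divfK ?gt_eqF].
Qed.

Theorem mainTheorem8 (R : realFieldType)
  (Nr : nat) (lamr : nat -> R)
  (mV : nat) (nV kV : 'I_mV -> nat) (GV : forall i, 'M[F2]_(kV i, nV i)) (lamV : 'I_mV -> R)
  (Ns : nat) (rhoS : nat -> R)
  (mC : nat) (nC kC : 'I_mC -> nat) (GC : forall i, 'M[F2]_(kC i, nC i)) (rhoC : 'I_mC -> R)
  (q : R) :
  (* edge fractions *)
  (forall j, 0 <= lamr j) -> (forall j, ~~ (2 <= j < Nr)%N -> lamr j = 0) ->
  (forall i, 0 <= lamV i) ->
  \sum_(2 <= j < Nr) lamr j + \sum_(i < mV) lamV i = 1 ->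
  (forall j, 0 <= rhoS j) -> (forall j, ~~ (2 <= j < Ns)%N -> rhoS j = 0) ->
  (forall i, 0 <= rhoC i) ->
  \sum_(2 <= j < Ns) rhoS j + \sum_(i < mC) rhoC i = 1 ->
  (* component codes: generator matrices of full rank, d_min >= 2 *)
  (forall i, \rank (GV i) = kV i) -> (forall i, (2 <= dmin (GV i))%N) ->
  (forall i, \rank (GC i) = kC i) -> (forall i, (2 <= dmin (GC i))%N) ->
  0 <= q <= 1 ->
  0 < D_C Ns rhoS GC rhoC ->
  let DC := D_C Ns rhoS GC rhoC in
  let dIEV := - ((IEV Nr lamr GV lamV q)^`()).[0] in
  let RHS := q * lamr 2%N
     + \sum_(i < mV | dmin (GV i) == 2%N) \sum_(z < (kV i).+1)
          q ^+ z * (1 - q) ^+ (kV i - z) * (2%:R * lamV i / (nV i)%:R)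
          * (DeltaV (GV i) (nV i - 2) (kV i - z))%:R in
  [/\ dIEV = RHS,
      (dIEV <= DC^-1) <->
        (RHS <= (rhoSPCprime Ns rhoS
                 + \sum_(i < mC | dmin (GC i) == 2%N)
                     2%:R * rhoC i / (nC i)%:R * (DeltaC (GC i) (nC i - 2))%:R)^-1),
      (forall i, (3 <= dmin (GV i))%N) -> 0 < lamr 2%N ->
        ((dIEV <= DC^-1) <-> (q <= (lamr 2%N * DC)^-1)) /\
        ((dIEV = DC^-1) <-> (q = (lamr 2%N * DC)^-1))
    & (forall i, (3 <= dmin (GV i))%N) -> 0 < lamr 2%N ->
      (forall i, (3 <= dmin (GC i))%N) ->
        ((dIEV <= DC^-1) <-> (q <= (lamr 2%N * rhoSPCprime Ns rhoS)^-1))].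
Proof.
move=> _ lamr0 _ _ _ _ _ _ rankGV dminGV _ _ _ DC_gt0 DC dIEV RHS.
have slope : dIEV = RHS by apply: IEV_slope.
have no_dmin2 (m : nat) (d : 'I_m -> nat) (F : 'I_m -> R) :
    (forall i, (3 <= d i)%N) -> \sum_(i < m | d i == 2%N) F i = 0.
  by move=> d_ge3; apply: big_pred0 => i; have := d_ge3 i; case: eqP => // ->.
have slope_rep : (forall i, (3 <= dmin (GV i))%N) -> dIEV = q * lamr 2%N.
  by move=> dminV3; rewrite slope /RHS no_dmin2 ?addr0.
split=> [//|| dminV3 lamr2_gt0 | dminV3 lamr2_gt0 dminC3]; first by rewrite slope.
  by rewrite slope_rep //; apply: stability_threshold.
have DC_spc : DC = rhoSPCprime Ns rhoS by rewrite /DC /D_C no_dmin2 ?addr0.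
by rewrite slope_rep // -DC_spc; apply: (stability_threshold _ lamr2_gt0 DC_gt0).1.
Qed.
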